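(* Let $A=A(u,v)$ be a $\mathbb{C}^k$-valued formal power series mapping, $u,v\in \mathbb{C}^k$, satisfying $\det A_u(u,v)\not\equiv 0$ and $A(0,v)\equiv 0$. Assume that $\mathrm{ord}_u\left(\det A_u(u,v)\right)\leq \nu$ for some nonnegative integer $\nu$. Then for every nonnegative integer $r$ and every formal power series $\psi (t,v)\in \mathbb{C}[[t,v]]$, $t\in \mathbb{C}^k$, if $\mathrm{ord}_u\left(\psi (A(u,v),v)\right) > r(\nu +1)$, then $\mathrm{ord}_t\, \psi (t,v)> r$.
   Context: For $S(x,x')\in\mathbb{C}[[x,x']]$, $\mathrm{ord}_x S$ denotes the order of $S$ viewed as a power series in $x$ with coefficients in $\mathbb{C}[[x']]$ (i.e. the smallest total degree in $x$ of a nonzero term; $+\infty$ if $S=0$). $A_u$ denotes the Jacobian matrix of $A$ with respect to $u$. *)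

From mathcomp Require Import all_boot all_algebra.
From mathcomp Require Import all_fingroup Rstruct complex.
From Stdlib Require Reals.
Set Implicit Arguments. Unset Strict Implicit. Unset Printing Implicit Defensive.
Import GRing.Theory.
Local Open Scope ring_scope.

Definition CC : fieldType := complex Rdefinitions.R.

Definition midx (k : nat) := {ffun 'I_k -> nat}.
Definition mdeg k (a : midx k) : nat := (\sum_(i < k) a i)%N.
Definition mzero k : midx k := [ffun => 0%N].
Definition madd k (a b : midx k) : midx k := [ffun i => (a i + b i)%N].
Definition msub k (a b : midx k) : midx k := [ffun i => (a i - b i)%N].
Definition munit k (j : 'I_k) : midx k := [ffun i => nat_of_bool (i == j)].

(* all multi-indices c with c <= a componentwise (each exactly once) *)
Definition below k (a : midx k) : seq (midx k) :=
  map (fun c : {ffun 'I_k -> 'I_(mdeg a).+1} => [ffun i => nat_of_ord (c i)])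
      (enum (fun c : {ffun 'I_k -> 'I_(mdeg a).+1} => [forall i, (c i <= a i)%N])).

(* all multi-indices c with |c| <= |a| (each exactly once) *)
Definition degbelow k (a : midx k) : seq (midx k) :=
  map (fun c : {ffun 'I_k -> 'I_(mdeg a).+1} => [ffun i => nat_of_ord (c i)])
      (enum (fun c : {ffun 'I_k -> 'I_(mdeg a).+1} =>
               (\sum_(i < k) nat_of_ord (c i) <= mdeg a)%N)).

(* A formal power series f(x,v) in C[[x,v]], x,v in C^k, given by its
   coefficients: f a b = coefficient of x^a v^b. *)
Definition ps (k : nat) := midx k -> midx k -> CC.

Definition pszero k : ps k := fun _ _ => 0.
Definition psone k : ps k := fun a b => if (mdeg a + mdeg b == 0)%N then 1 else 0.
Definition psadd k (f g : ps k) : ps k := fun a b => f a b + g a b.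
Definition psscale k (c : CC) (f : ps k) : ps k := fun a b => c * f a b.
Definition psmul k (f g : ps k) : ps k := fun a b =>
  \sum_(a1 <- below a) \sum_(b1 <- below b) f a1 b1 * g (msub a a1) (msub b b1).
Definition psexp k (f : ps k) (n : nat) : ps k := iter n (psmul f) (@psone k).

Definition psderu k (j : 'I_k) (f : ps k) : ps k := fun a b =>
  (a j).+1%:R * f (madd a (munit j)) b.

Definition jacdet k (A : 'I_k -> ps k) : ps k :=
  \big[@psadd k/@pszero k]_(s : 'S_k)
     psscale ((-1) ^+ s) (\big[@psmul k/@psone k]_(i < k) psderu (s i) (A i)).

Definition mpow k (A : 'I_k -> ps k) (al : midx k) : ps k :=
  \big[@psmul k/@psone k]_(i < k) psexp (A i) (al i).

(* This is the formal substitution;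
   the sum over the t-exponents al is restricted to |al| <= |a|, which is exact
   when A(0,v) = 0 (then A^al has u-order >= |al|). *)
Definition pscomp k (psi : ps k) (A : 'I_k -> ps k) : ps k := fun a b =>
  \sum_(al <- degbelow a) \sum_(be <- below b)
     psi al be * mpow A al a (msub b be).

(* "ord_x f > n": every coefficient of f of total degree <= n in x vanishes.
   Hence ord_x f <= n  iff  ~ ordx_gt f n. *)
Definition ordx_gt k (f : ps k) (n : nat) : Prop :=
  forall a b, (mdeg a <= n)%N -> f a b = 0.

Definition ps_nonzero k (f : ps k) : Prop := exists a b, f a b != 0.

From HB Require Import structures.
From mathcomp Require Import all_boot all_algebra all_fingroup.
From mathcomp Require Import Rstruct complex boolp zify.
Set Implicit Arguments. Unset Strict Implicit. Unset Printing Implicit Defensive.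
Import GRing.Theory Num.Theory.
Local Open Scope ring_scope.

(* For [r = 0], the constant term in [u] of [psi(A(u,v),v)]
   is [psi(0,v)] because [A(0,v) = 0].  For the step, the chain rule says that
   the gradient of [psi o A] is [(grad psi o A) A_u]; multiplying by the
   adjugate of [A_u] gives
     [det A_u * (d_i psi o A) = sum_j d_j (psi o A) * adj(A_u)_(j,i)],
   whose [u]-order exceeds [(r+1)(nu+1) - 1 = r(nu+1) + nu].  The [u]-order is
   additive on products (compare leading forms over the domain [C[[v]]]), so
   [(d_i psi) o A] has [u]-order [> r(nu+1)], hence [d_i psi] has [t]-order
   [> r] by induction, and [psi], which has no constant term, has [t]-order
   [> r+1]. *)

(* Decides the index comparisons coming from [munit], then treats every entry
   [x i] of a multi-index as an atom for [lia]. *)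
Ltac midx_lia :=
  rewrite ?ffunE ?eqxx /=;
  repeat match goal with |- context [?i == ?j] =>
    let _ := constr:(nat_of_ord i) in
    let b := fresh "b" in let h := fresh "h" in
    set b := (i == j); have [h|/negbTE h] := eqVneq i j;
    rewrite /b ?h ?eqxx /=; clear b h end;
  repeat match goal with |- context [@fun_of_fin _ _ _ ?f ?i] =>
    let x := fresh "x" in move: (f i) => x end;
  lia.

Lemma eq_big_support (R : nmodType) (T : eqType) (s1 s2 : seq T) (F : T -> R) :
  uniq s1 -> uniq s2 -> (forall x, F x != 0 -> (x \in s1) && (x \in s2)) ->
  \sum_(x <- s1) F x = \sum_(x <- s2) F x.
Proof.
move=> u1 u2 supp.
rewrite [LHS](bigID (fun x => F x == 0)) [RHS](bigID (fun x => F x == 0)) /=.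
rewrite [X in X + _]big1 ?[X in _ = X + _]big1 ?add0r; try by move=> x /eqP.
rewrite -big_filter -[RHS]big_filter; apply: perm_big.
apply: uniq_perm; rewrite ?filter_uniq // => x; rewrite !mem_filter.
by case: (boolP (F x == 0)) => //= /supp /andP[-> ->].
Qed.

Lemma big_seq_single (R : nmodType) (T : eqType) (r : seq T) j (F : T -> R) :
  uniq r -> j \in r -> (forall i, i \in r -> i != j -> F i = 0) ->
  \sum_(i <- r) F i = F j.
Proof.
move=> ur jr F0; rewrite (bigD1_seq j) // big1_seq => [|i /andP[ij ir]].
  exact: addr0.
exact: F0.
Qed.

(** * Multi-indices *)

Section MultiIndex.
Variable k : nat.
Implicit Types a c d e : midx k.

Definition mle c a : bool := [forall i, c i <= a i]%N.

Lemma mleP c a : reflect (forall i, c i <= a i)%N (mle c a).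
Proof. exact: forallP. Qed.

Lemma mle_refl a : mle a a.
Proof. exact/mleP. Qed.

Lemma mle_trans c d e : mle c d -> mle d e -> mle c e.
Proof. by move=> /mleP cd /mleP de; apply/mleP=> i; apply: leq_trans (cd i) (de i). Qed.

Lemma mle_maddr c d : mle c (madd c d).
Proof. by apply/mleP=> i; rewrite ffunE leq_addr. Qed.

Lemma leq_mdeg a i : (a i <= mdeg a)%N.
Proof. by rewrite /mdeg (bigD1 i) //= leq_addr. Qed.

Lemma mdegD c d : mdeg (madd c d) = (mdeg c + mdeg d)%N.
Proof. by rewrite /mdeg -big_split; apply: eq_bigr => i _; rewrite ffunE. Qed.

Lemma mle_mdeg c a : mle c a -> (mdeg c <= mdeg a)%N.
Proof. by move/mleP=> ca; apply: leq_sum. Qed.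

Lemma mdegB a c : mle c a -> mdeg (msub a c) = (mdeg a - mdeg c)%N.
Proof.
move=> ca; apply/eqP; rewrite -(eqn_add2r (mdeg c)) subnK ?mle_mdeg //.
rewrite -mdegD /mdeg; apply/eqP/eq_bigr=> i _; move/mleP: ca => /(_ i).
by rewrite !ffunE => /subnK.
Qed.

Lemma mdeg_eq0 a : (mdeg a == 0%N) = (a == mzero k).
Proof.
apply/idP/eqP=> [a0|->]; last by rewrite /mdeg big1 // => i _; rewrite ffunE.
apply/ffunP=> i; rewrite ffunE; apply/eqP; rewrite -leqn0 -(eqP a0); exact: leq_mdeg.
Qed.

Lemma mdeg_munit (j : 'I_k) : mdeg (munit j) = 1%N.
Proof.
rewrite /mdeg (bigD1 j) //= big1 ?ffunE ?eqxx // => i /negbTE ij.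
by rewrite ffunE ij.
Qed.

Lemma maddC c d : madd c d = madd d c.
Proof. by apply/ffunP=> i; rewrite !ffunE addnC. Qed.

Lemma maddK c d : msub (madd c d) c = d.
Proof. by apply/ffunP=> i; midx_lia. Qed.

Lemma maddKr c (j : 'I_k) : msub (madd c (munit j)) (munit j) = c.
Proof. by apply/ffunP=> i; midx_lia. Qed.

Lemma msubD a c d : msub a (madd c d) = msub (msub a c) d.
Proof. by apply/ffunP=> i; midx_lia. Qed.

Lemma msub0 a : msub a (mzero k) = a.
Proof. by apply/ffunP=> i; rewrite !ffunE subn0. Qed.

Lemma msubDD a c (j : 'I_k) :
  msub (madd a (munit j)) (madd c (munit j)) = msub a c.
Proof. by apply/ffunP=> i; midx_lia. Qed.

Lemma msubK a c : mle c a -> msub a (msub a c) = c.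
Proof. by move/mleP=> ca; apply/ffunP=> i; have := ca i; midx_lia. Qed.

Lemma maddBK c e : mle c e -> madd c (msub e c) = e.
Proof. by move/mleP=> ce; apply/ffunP=> i; have := ce i; midx_lia. Qed.

Lemma madd_inj c : injective (madd c).
Proof. by move=> x y /ffunP xy; apply/ffunP=> i; have := xy i; midx_lia. Qed.

Lemma madd_injr c : injective (fun x => madd x c).
Proof. by move=> x y /ffunP xy; apply/ffunP=> i; have := xy i; midx_lia. Qed.

Lemma bounded_midx_inj n :
  injective (fun c : {ffun 'I_k -> 'I_n} => [ffun i => nat_of_ord (c i)] : midx k).
Proof.
by move=> x y /ffunP xy; apply/ffunP=> i; apply/val_inj; have := xy i; rewrite !ffunE.
Qed.

Lemma mem_below a c : (c \in below a) = mle c a.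
Proof.
apply/mapP/idP => [[x]|/mleP ca].
  by rewrite mem_enum => /forallP xa ->; apply/mleP=> i; rewrite ffunE.
have c_small i : (c i < (mdeg a).+1)%N by rewrite ltnS (leq_trans (ca i)) ?leq_mdeg.
exists [ffun i => inord (c i)]; last by apply/ffunP=> i; rewrite !ffunE inordK.
by rewrite mem_enum; apply/forallP=> i; rewrite ffunE inordK.
Qed.

Lemma uniq_below a : uniq (below a).
Proof. by rewrite map_inj_uniq ?enum_uniq //; exact: bounded_midx_inj. Qed.

Lemma mzero_below a : mzero k \in below a.
Proof. by rewrite mem_below; apply/mleP=> i; rewrite ffunE. Qed.

Lemma mem_degbelow a c : (c \in degbelow a) = (mdeg c <= mdeg a)%N.
Proof.
apply/mapP/idP => [[x]|ca].
  rewrite mem_enum => xa ->; rewrite /mdeg.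
  by rewrite (eq_bigr (fun i => nat_of_ord (x i))) // => i _; rewrite ffunE.
have c_small i : (c i < (mdeg a).+1)%N by rewrite ltnS (leq_trans (leq_mdeg c i)).
exists [ffun i => inord (c i)]; last by apply/ffunP=> i; rewrite !ffunE inordK.
by rewrite mem_enum unfold_in /= (eq_bigr (fun i => c i)) // => i _; rewrite ffunE inordK.
Qed.

Lemma uniq_degbelow a : uniq (degbelow a).
Proof. by rewrite map_inj_uniq ?enum_uniq //; exact: bounded_midx_inj. Qed.

Lemma exchange_below (R : nmodType) a (F : midx k -> midx k -> R) :
  \sum_(e <- below a) \sum_(c <- below e) F c e =
  \sum_(c <- below a) \sum_(d <- below (msub a c)) F c (madd c d).
Proof.
transitivity (\sum_(e <- below a) \sum_(c <- below a) if mle c e then F c e else 0).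
  apply: eq_big_seq => e; rewrite mem_below => ea.
  rewrite -big_mkcond /= -[RHS]big_filter; apply: perm_big.
  apply: uniq_perm; rewrite ?filter_uniq ?uniq_below // => c.
  rewrite mem_filter !mem_below; apply/idP/andP=> [ce|[]//].
  by split=> //; apply: mle_trans ce ea.
rewrite exchange_big /=; apply: eq_big_seq => c; rewrite mem_below => /mleP ca.
rewrite -big_mkcond /= -big_filter -(big_map (madd c) xpredT (F c)).
apply: perm_big; apply: uniq_perm.
- by rewrite filter_uniq ?uniq_below.
- by rewrite map_inj_uniq ?uniq_below //; exact: madd_inj.
move=> e; rewrite mem_filter mem_below; apply/andP/mapP.
  move=> [/mleP ce /mleP ea]; exists (msub e c); last by rewrite maddBK //; apply/mleP.
  by rewrite mem_below; apply/mleP=> i; have := ce i; have := ea i; midx_lia.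
move=> [d]; rewrite mem_below => /mleP dac ->.
by split; apply/mleP=> i; have := ca i; have := dac i; midx_lia.
Qed.

Lemma sum_below_compl (R : nmodType) a (F : midx k -> R) :
  \sum_(c <- below a) F c = \sum_(c <- below a) F (msub a c).
Proof.
have compl_below c : msub a c \in below a.
  by rewrite mem_below; apply/mleP=> i; midx_lia.
rewrite -(big_map (msub a) xpredT F); apply: perm_big; apply: uniq_perm.
- exact: uniq_below.
- rewrite map_inj_in_uniq ?uniq_below // => x y; rewrite !mem_below => xa ya xy.
  by rewrite -(msubK xa) -(msubK ya) xy.
move=> c; apply/idP/mapP => [ca|[x _ ->]]; last exact: compl_below.
by exists (msub a c); rewrite ?compl_below // msubK -?mem_below.
Qed.

Lemma sum_below_swap (R : nmodType) a (F : midx k -> midx k -> R) :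
  \sum_(c <- below a) F c (msub a c) = \sum_(c <- below a) F (msub a c) c.
Proof.
rewrite sum_below_compl; apply: eq_big_seq => c; rewrite mem_below => ca.
by rewrite msubK.
Qed.

(* The factor [c i] kills the terms with [c i = 0], the others are [c' + e_i]. *)
Lemma sum_shift (R : nmodType) (s s' : seq (midx k)) i (F : midx k -> R) :
  uniq s -> uniq s' ->
  (forall c, ((c \in s) && (c i != 0%N)) = (c \in map (fun x => madd x (munit i)) s')) ->
  \sum_(c <- s) F c *+ c i = \sum_(c <- s') F (madd c (munit i)) *+ (c i).+1.
Proof.
move=> us us' mem_s.
rewrite (bigID (fun c => c i == 0%N)) /= big1 ?add0r; last by move=> c /eqP ->.
transitivity (\sum_(c <- map (fun x => madd x (munit i)) s') F c *+ c i); last first.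
  by rewrite big_map; apply: eq_bigr => c _; rewrite !ffunE eqxx addn1.
rewrite -big_filter; apply: perm_big; apply: uniq_perm.
- by rewrite filter_uniq.
- by rewrite map_inj_uniq //; exact: madd_injr.
by move=> c; rewrite mem_filter -mem_s andbC.
Qed.

Lemma sum_below_shift (R : nmodType) a j (F : midx k -> R) :
  \sum_(c <- below (madd a (munit j))) F c *+ c j =
  \sum_(c <- below a) F (madd c (munit j)) *+ (c j).+1.
Proof.
apply: sum_shift; rewrite ?uniq_below // => c; rewrite mem_below.
apply/andP/mapP => [[/mleP ca cj]|[c' +] ->].
  exists (msub c (munit j)); last by apply/ffunP=> i; have := ca i; move: cj; midx_lia.
  by rewrite mem_below; apply/mleP=> i; have := ca i; move: cj; midx_lia.
rewrite mem_below => /mleP c'a; split; last by midx_lia.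
by apply/mleP=> i; have := c'a i; midx_lia.
Qed.

Lemma sum_degbelow_shift (R : nmodType) a j i (F : midx k -> R) :
  \sum_(c <- degbelow (madd a (munit j))) F c *+ c i =
  \sum_(c <- degbelow a) F (madd c (munit i)) *+ (c i).+1.
Proof.
have ei_le c : c i != 0%N -> mle (munit i) c.
  by move=> ci; apply/mleP=> l; move: ci; midx_lia.
apply: sum_shift; rewrite ?uniq_degbelow // => c; rewrite mem_degbelow mdegD mdeg_munit.
apply/andP/mapP => [[ca ci]|[c' +] ->].
  exists (msub c (munit i)); last by rewrite maddC maddBK ?ei_le.
  by rewrite mem_degbelow mdegB ?ei_le // mdeg_munit; lia.
by rewrite mem_degbelow mdegD mdeg_munit !ffunE eqxx; split; lia.
Qed.

End MultiIndex.

(** * The ring of formal power series *)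

Definition PS k := ps k.
HB.instance Definition _ k := gen_eqMixin (PS k).
HB.instance Definition _ k := gen_choiceMixin (PS k).

Section PSRing.
Variable k : nat.
Implicit Types f g h : PS k.

Lemma psP f g : (forall a b, f a b = g a b) -> f = g.
Proof. by move=> fg; apply: funext => a; apply: funext => b; exact: fg. Qed.

Definition psopp f : PS k := fun a b => - f a b.

Lemma psaddA : associative (@psadd k).
Proof. by move=> f g h; apply: psP => a b; rewrite /psadd addrA. Qed.
Lemma psaddC : commutative (@psadd k).
Proof. by move=> f g; apply: psP => a b; rewrite /psadd addrC. Qed.
Lemma psadd0 : left_id (@pszero k) (@psadd k).
Proof. by move=> f; apply: psP => a b; rewrite /psadd /pszero add0r. Qed.
Lemma psaddN : left_inverse (@pszero k) psopp (@psadd k).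
Proof. by move=> f; apply: psP => a b; rewrite /psadd /pszero /psopp addNr. Qed.

HB.instance Definition _ := GRing.isZmodule.Build (PS k) psaddA psaddC psadd0 psaddN.

Lemma psmulC : commutative (@psmul k).
Proof.
move=> f g; apply: psP => a b; rewrite /psmul.
rewrite (sum_below_swap a (fun a1 a2 => \sum_(b1 <- below b) f a1 b1 * g a2 (msub b b1))).
apply: eq_bigr => c _.
rewrite (sum_below_swap b (fun b1 b2 => f (msub a c) b1 * g c b2)).
by apply: eq_bigr => d _; rewrite mulrC.
Qed.

Lemma psmulA : associative (@psmul k).
Proof.
move=> f g h; apply: psP => a b; rewrite /psmul; symmetry.
transitivity (\sum_(e <- below a) \sum_(c <- below e) \sum_(e' <- below b)
   \sum_(c' <- below e') f c c' * g (msub e c) (msub e' c') * h (msub a e) (msub b e')).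
  apply: eq_bigr => e _; rewrite exchange_big /=; apply: eq_bigr => e' _.
  rewrite big_distrl /=; apply: eq_bigr => c _; exact: big_distrl.
rewrite exchange_below; apply: eq_bigr => c _.
under eq_bigr => d _ do rewrite exchange_below.
rewrite exchange_big /=; apply: eq_bigr => c' _.
rewrite big_distrr /=; apply: eq_bigr => d _.
rewrite big_distrr /=; apply: eq_bigr => d' _.
by rewrite !maddK -!msubD mulrA.
Qed.

Lemma psoneE a b : psone a b = if (a == mzero k) && (b == mzero k) then 1 else 0.
Proof. by rewrite /psone addn_eq0 !mdeg_eq0. Qed.

Lemma psmul1 : left_id (@psone k) (@psmul k).
Proof.
move=> f; apply: psP => a b; rewrite /psmul.
rewrite (big_seq_single (uniq_below a) (mzero_below a)); last first.
  by move=> c _ /negbTE c0; apply: big1 => d _; rewrite psoneE c0 mul0r.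
rewrite (big_seq_single (uniq_below b) (mzero_below b)); last first.
  by move=> d _ /negbTE d0; rewrite psoneE d0 andbF mul0r.
by rewrite psoneE !eqxx mul1r !msub0.
Qed.

Lemma psmulDl : left_distributive (@psmul k) (@psadd k).
Proof.
move=> f g h; apply: psP => a b; rewrite /psmul /psadd -big_split /=.
by apply: eq_bigr => c _; rewrite -big_split /=; apply: eq_bigr => d _; rewrite mulrDl.
Qed.

Lemma psone_neq0 : (@psone k : PS k) != @pszero k.
Proof.
apply/eqP=> /(congr1 (fun f : PS k => f (mzero k) (mzero k))).
by rewrite psoneE eqxx /pszero => /eqP; rewrite oner_eq0.
Qed.

HB.instance Definition _ := GRing.Zmodule_isComNzRing.Build (PS k)
  psmulA psmulC psmul1 psmulDl psone_neq0.

Lemma coefD f g a b : (f + g) a b = f a b + g a b.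
Proof. by []. Qed.

Lemma coefMn f n a b : (f *+ n) a b = f a b *+ n.
Proof. by elim: n => [|n IH]; rewrite ?mulr0n // !mulrS coefD IH. Qed.

Lemma coef_sum (I : Type) (r : seq I) (P : pred I) (F : I -> PS k) a b :
  (\sum_(i <- r | P i) F i) a b = \sum_(i <- r | P i) F i a b.
Proof. exact: (big_morph (fun f : PS k => f a b)). Qed.

Lemma coefM f g a b : (f * g) a b =
  \sum_(a1 <- below a) \sum_(b1 <- below b) f a1 b1 * g (msub a a1) (msub b b1).
Proof. by []. Qed.

Lemma coef1 a b : (1 : PS k) a b = if (a == mzero k) && (b == mzero k) then 1 else 0.
Proof. exact: psoneE. Qed.

End PSRing.

(** * Partial derivatives and order in the first block *)

Section Derivative.
Variable k : nat.
Implicit Types f g h : PS k.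

Definition pd (j : 'I_k) f : PS k := psderu j f.

Lemma pdE j f a b : pd j f a b = (a j).+1%:R * f (madd a (munit j)) b.
Proof. by []. Qed.

Lemma pdM j f g : pd j (f * g) = pd j f * g + pd j g * f.
Proof.
apply: psP => a b; rewrite coefD pdE !coefM.
set a' := madd a (munit j).
pose T c := \sum_(d <- below b) f c d * g (msub a' c) (msub b d).
have split_factor c :
    c \in below a' -> (a j).+1%:R * T c = T c *+ c j + T c *+ msub a' c j.
  rewrite mem_below => /mleP /(_ j) ca; rewrite -mulrnDr mulr_natl.
  by congr (_ *+ _); move: ca; rewrite /a'; midx_lia.
have left_part : \sum_(c <- below a') T c *+ c j =
    \sum_(a1 <- below a) \sum_(b1 <- below b) pd j f a1 b1 * g (msub a a1) (msub b b1).
  rewrite /a' sum_below_shift; apply: eq_bigr => c _.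
  rewrite /T msubDD -mulr_natl mulr_sumr; apply: eq_bigr => d _.
  by rewrite pdE mulrA.
have right_part : \sum_(c <- below a') T c *+ msub a' c j =
    \sum_(a1 <- below a) \sum_(b1 <- below b) pd j g a1 b1 * f (msub a a1) (msub b b1).
  rewrite sum_below_compl.
  rewrite (eq_big_seq (fun c =>
    (\sum_(d <- below b) f (msub a' c) d * g c (msub b d)) *+ c j));
    last by move=> c; rewrite mem_below => ca'; rewrite /T msubK.
  rewrite /a' sum_below_shift; apply: eq_bigr => c _.
  rewrite -mulr_natl mulr_sumr msubDD.
  rewrite (sum_below_swap b (fun d1 d2 =>
    (c j).+1%:R * (f (msub a c) d1 * g (madd c (munit j)) d2))).
  by apply: eq_bigr => d _; rewrite pdE [f _ _ * _]mulrC mulrA.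
by rewrite -left_part -right_part mulr_sumr (eq_big_seq _ split_factor) big_split.
Qed.

Lemma pd1 j : pd j (1 : PS k) = 0.
Proof.
apply: psP => a b; rewrite pdE coef1.
case: eqP => [/ffunP /(_ j)|]; last by rewrite mulr0.
by rewrite !ffunE eqxx addn1.
Qed.

Lemma pdX j f n : pd j (f ^+ n) = (f ^+ n.-1 * pd j f) *+ n.
Proof.
elim: n => [|n IH]; first by rewrite expr0 pd1 mulr0n.
case: n IH => [|n] IH; rewrite exprS pdM IH /=.
  by rewrite !expr0 mulr0n mul0r addr0 mul1r mulr1 mulr1n.
rewrite mulrnAl -mulrA [pd j f * f]mulrC mulrA -exprSr [in RHS]mulrS.
by rewrite [pd j f * _]mulrC.
Qed.

Definition ordx_ge f p := forall a b, (mdeg a < p)%N -> f a b = 0.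

Lemma ordx_geM f g p q : ordx_ge f p -> ordx_ge g q -> ordx_ge (f * g) (p + q).
Proof.
move=> fp gq a b apq; rewrite coefM big1_seq // => c /andP[_]; rewrite mem_below => ca.
apply: big1 => d _; have := mdegB ca; have := mle_mdeg ca.
case: (ltnP (mdeg c) p) => cp; first by rewrite fp ?mul0r.
by move=> ca_deg acdeg; rewrite gq ?mulr0 // acdeg; lia.
Qed.

Lemma ordx_geX f n : ordx_ge f 1 -> ordx_ge (f ^+ n) n.
Proof.
move=> f1; elim: n => [|n IH]; first by rewrite expr0.
by rewrite exprS -add1n; apply: ordx_geM.
Qed.

Lemma ordx_ge_prod (I : Type) (r : seq I) (F : I -> PS k) (p : I -> nat) :
  (forall i, ordx_ge (F i) (p i)) -> ordx_ge (\prod_(i <- r) F i) (\sum_(i <- r) p i).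
Proof.
move=> Fp; elim: r => [|x r IH]; first by rewrite !big_nil.
by rewrite !big_cons; apply: ordx_geM.
Qed.

Lemma ordx_gt_le f m n : (m <= n)%N -> ordx_gt f n -> ordx_gt f m.
Proof. by move=> mn fn a b am; apply: fn; exact: leq_trans am mn. Qed.

Lemma ordx_gt_sum (I : Type) (r : seq I) (F : I -> PS k) n :
  (forall i, ordx_gt (F i) n) -> ordx_gt (\sum_(i <- r) F i) n.
Proof.
move=> Fn; elim: r => [|x r IH]; first by rewrite big_nil.
by rewrite big_cons => a b an; rewrite coefD Fn ?IH ?addr0.
Qed.

Lemma ordx_gtMr f g n : ordx_gt f n -> ordx_gt (f * g) n.
Proof.
move=> fn a b an; rewrite coefM big1_seq // => c /andP[_]; rewrite mem_below => ca.
by apply: big1 => d _; rewrite fn ?mul0r // (leq_trans (mle_mdeg ca)).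
Qed.

Lemma ordx_gt_pd j f n : ordx_gt f n.+1 -> ordx_gt (pd j f) n.
Proof. by move=> fn a b an; rewrite pdE fn ?mulr0 // mdegD mdeg_munit addn1. Qed.

Lemma ordx_gt0P f : ordx_gt f 0 <-> forall b, f (mzero k) b = 0.
Proof.
split=> [f0 b|f0 a b]; first by apply: f0; rewrite leqn0 mdeg_eq0.
by rewrite leqn0 mdeg_eq0 => /eqP ->.
Qed.

(* Characteristic 0 is used here: the factor [(a i).+1%:R] of [pdE] is nonzero. *)
Lemma ordx_gt_from_pd f r :
  ordx_gt f 0 -> (forall i, ordx_gt (pd i f) r) -> ordx_gt f r.+1.
Proof.
move=> f0 fr a b ar.
have [->|/eqP a0] := eqVneq a (mzero k); first by move/ordx_gt0P: f0.
have [i ai] : exists i, a i != 0%N.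
  apply: contra_notP a0 => /forallNP a0; apply/ffunP=> i; rewrite ffunE.
  by apply/eqP/negPn/negP; apply: a0.
pose a' := msub a (munit i).
have ei_le : mle (munit i) a by apply/mleP=> l; move: ai; midx_lia.
have -> : a = madd a' (munit i) by rewrite maddC maddBK.
have a'r : (mdeg a' <= r)%N by rewrite mdegB // mdeg_munit; lia.
have /eqP := fr i a' b a'r.
by rewrite pdE mulf_eq0 pnatr_eq0 => /eqP.
Qed.

End Derivative.

(** * Substitution into a power series and the chain rule *)

Section Substitution.
Variable k : nat.
Variable A : 'I_k -> PS k.

Definition mpow_seq (r : seq 'I_k) (al : midx k) : PS k := \prod_(i <- r) A i ^+ al i.

Lemma pd_mpow_seq j (r : seq 'I_k) (al : midx k) : uniq r ->
  pd j (mpow_seq r al) =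
  \sum_(i <- r) (mpow_seq r (msub al (munit i)) * pd j (A i)) *+ al i.
Proof.
elim: r => [|x r IH] /=; first by rewrite /mpow_seq !big_nil pd1.
move=> /andP[xr ur].
have al_off i : i \in r -> msub al (munit x) i = al i.
  move=> ir; rewrite !ffunE (_ : (i == x) = false) ?subn0 //.
  by apply: contraNF xr => /eqP <-.
have off_x i : i \in r -> msub al (munit i) x = al x.
  move=> ir; rewrite !ffunE (_ : (x == i) = false) ?subn0 //.
  by apply: contraNF xr => /eqP ->.
rewrite /mpow_seq !big_cons -/(mpow_seq r al) pdM IH // pdX.
have drop_x : mpow_seq r (msub al (munit x)) = mpow_seq r al.
  by apply: eq_big_seq => i /al_off ->.
have head_out i : i \in r ->
    (\prod_(l <- x :: r) A l ^+ msub al (munit i) l * pd j (A i)) *+ al i =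
    A x ^+ al x * ((mpow_seq r (msub al (munit i)) * pd j (A i)) *+ al i).
  by move=> ir; rewrite big_cons off_x // mulrnAr mulrA.
rewrite (eq_big_seq _ head_out) -mulr_sumr -/(mpow_seq r (msub al (munit x))) drop_x.
rewrite (_ : msub al (munit x) x = (al x).-1); last by rewrite !ffunE eqxx subn1.
rewrite [X in _ = _ + X]mulrC; congr (_ + _).
by rewrite !mulrnAl; congr (_ *+ _); rewrite mulrAC.
Qed.

Lemma mpowE (al : midx k) : mpow A al = mpow_seq (index_enum 'I_k) al.
Proof.
rewrite /mpow /mpow_seq; apply: (eq_bigr (fun i => A i ^+ al i)) => i _.
by rewrite /psexp; elim: (al i) => //= n ->; rewrite exprS.
Qed.

Lemma pd_mpow j (al : midx k) :
  pd j (mpow A al) =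
  \sum_(i < k) ((mpow A (msub al (munit i)) : PS k) * pd j (A i)) *+ al i.
Proof.
by rewrite mpowE pd_mpow_seq ?index_enum_uniq //; apply: eq_bigr => i _; rewrite mpowE.
Qed.

Lemma mpow0 : mpow A (mzero k) = 1 :> PS k.
Proof. by rewrite mpowE /mpow_seq big1 // => i _; rewrite ffunE expr0. Qed.

Hypothesis A_ord1 : forall i, ordx_ge (A i) 1.

Lemma ordx_ge_mpow (al : midx k) : ordx_ge (mpow A al) (mdeg al).
Proof. by rewrite mpowE; apply: ordx_ge_prod => i; apply: ordx_geX. Qed.

(* Terms with [mdeg al > mdeg a] vanish, so any larger range may be used. *)
Lemma pscompE (psi : PS k) (a a' b : midx k) : (mdeg a <= mdeg a')%N ->
  pscomp psi A a b =
  \sum_(al <- degbelow a') \sum_(be <- below b) psi al be * mpow A al a (msub b be).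
Proof.
move=> aa'; apply: eq_big_support; rewrite ?uniq_degbelow // => al nz.
suff ala : (mdeg al <= mdeg a)%N by rewrite !mem_degbelow ala (leq_trans ala).
rewrite leqNgt; apply: contra nz => alhi; apply/eqP/big1 => be _.
by rewrite ordx_ge_mpow ?mulr0.
Qed.

Lemma coef_pscompM (phi E : PS k) (a b : midx k) :
  ((pscomp phi A : PS k) * E) a b =
  \sum_(al <- degbelow a) \sum_(be <- below b)
    phi al be * ((mpow A al : PS k) * E) a (msub b be).
Proof.
rewrite coefM.
transitivity (\sum_(c <- below a) \sum_(d <- below b) \sum_(al <- degbelow a)
   \sum_(be <- below d) phi al be * (mpow A al c (msub d be) * E (msub a c) (msub b d))).
  apply: eq_big_seq => c; rewrite mem_below => ca; apply: eq_bigr => d _.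
  rewrite (pscompE phi d (mle_mdeg ca)) mulr_suml; apply: eq_bigr => al _.
  by rewrite mulr_suml; apply: eq_bigr => be _; rewrite mulrA.
under eq_bigr => c _ do rewrite exchange_big.
rewrite exchange_big; apply: eq_bigr => al _.
under eq_bigr => c _ do rewrite exchange_below.
rewrite exchange_big; apply: eq_bigr => be _.
rewrite coefM mulr_sumr; apply: eq_bigr => c _.
by rewrite mulr_sumr; apply: eq_bigr => d _; rewrite maddK -msubD.
Qed.

Lemma pd_pscomp (psi : PS k) j :
  pd j (pscomp psi A) = \sum_(i < k) (pscomp (pd i psi) A : PS k) * pd j (A i).
Proof.
apply: psP => a b; rewrite coef_sum pdE.
transitivity (\sum_(al <- degbelow (madd a (munit j))) \sum_(be <- below b)
   psi al be * pd j (mpow A al) a (msub b be)).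
  rewrite /pscomp mulr_sumr; apply: eq_bigr => al _.
  by rewrite mulr_sumr; apply: eq_bigr => be _; rewrite pdE mulrCA.
transitivity (\sum_(i < k) \sum_(al <- degbelow (madd a (munit j)))
   (\sum_(be <- below b) psi al be *
       ((mpow A (msub al (munit i)) : PS k) * pd j (A i)) a (msub b be)) *+ al i).
  rewrite [RHS]exchange_big /=; apply: eq_bigr => al _.
  under [RHS]eq_bigr => i _ do rewrite -sumrMnl.
  rewrite [RHS]exchange_big /=; apply: eq_bigr => be _.
  rewrite pd_mpow coef_sum mulr_sumr; apply: eq_bigr => i _.
  by rewrite coefMn mulrnAr.
apply: eq_bigr => i _; rewrite coef_pscompM sum_degbelow_shift.
apply: eq_bigr => al _; rewrite maddKr -sumrMnl; apply: eq_bigr => be _.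
by rewrite pdE -mulrnAl -mulr_natl.
Qed.

Lemma pscomp_mzero (psi : PS k) (b : midx k) : pscomp psi A (mzero k) b = psi (mzero k) b.
Proof.
have mdeg_mzero : mdeg (mzero k) = 0%N by apply/eqP; rewrite mdeg_eq0.
rewrite /pscomp (big_seq_single (j := mzero k) (uniq_degbelow _)); last first.
- by move=> al; rewrite mem_degbelow mdeg_mzero leqn0 mdeg_eq0 => /eqP ->; rewrite eqxx.
- by rewrite mem_degbelow.
have sub_eq0 be : mle be b -> (msub b be == mzero k) = (be == b).
  move=> /mleP beb; apply/eqP/eqP => [/ffunP eq0|->]; apply/ffunP=> i.
    by have := eq0 i; have := beb i; midx_lia.
  by midx_lia.
rewrite mpow0 (big_seq_single (j := b) (uniq_below _)); last first.
- move=> be; rewrite mem_below => beb /negbTE neb.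
  by rewrite coef1 eqxx sub_eq0 // neb mulr0.
- by rewrite mem_below mle_refl.
by rewrite coef1 eqxx sub_eq0 ?mle_refl // eqxx mulr1.
Qed.

Lemma ordx_gt0_pscomp (psi : PS k) :
  ordx_gt (pscomp psi A) 0 -> ordx_gt psi 0.
Proof. by move=> /ordx_gt0P comp0; apply/ordx_gt0P => b; rewrite -pscomp_mzero. Qed.

End Substitution.

(** * The order of a product *)

Lemma ex_min_nat (P : nat -> Prop) :
  (exists n, P n) -> exists2 m, P m & forall n, P n -> (m <= n)%N.
Proof.
move=> [n Pn]; have exPb : exists n, `[< P n >] by exists n; apply/asboolP.
by case: (ex_minnP exPb) => m /asboolP Pm minm; exists m => // j /asboolP /minm.
Qed.

Lemma base_digits_inj M n (f g : nat -> nat) :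
  (forall i, i < n -> f i < M)%N -> (forall i, i < n -> g i < M)%N ->
  (\sum_(i < n) f i * M ^ i = \sum_(i < n) g i * M ^ i)%N ->
  forall i, (i < n)%N -> f i = g i.
Proof.
elim: n f g => [|n IH] f g fM gM + i //.
have M_gt0 : (0 < M)%N by have := fM 0%N isT; lia.
have shift h : (\sum_(l < n) h (bump 0 l) * M ^ bump 0 l =
                M * \sum_(l < n) h l.+1 * M ^ l)%N.
  by rewrite big_distrr /=; apply: eq_bigr => l _; rewrite /bump /= add1n expnS mulnCA.
rewrite !big_ord_recl /= !expn0 !muln1 !shift => fg.
have fg0 : f 0%N = g 0%N.
  have := congr1 (modn^~ M) fg; rewrite /= ![(_ + M * _)%N]addnC ![(M * _)%N]mulnC.
  by rewrite !modnMDl !modn_small //; [exact: gM | exact: fM].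
case: i => [|i] lt_i //; apply: (IH (fun l => f l.+1) (fun l => g l.+1)) => //.
- by move=> l ln; apply: fM.
- by move=> l ln; apply: gM.
by move: fg; rewrite fg0 => /eqP; rewrite eqn_add2l eqn_mul2l gtn_eqF //= => /eqP.
Qed.

Section Leading.
Variable k : nat.
Implicit Types (f g h : PS k) (P Q : midx k -> Prop).

(* Base-[M] weights order the multi-indices of a fixed degree compatibly with
   addition, and separate all multi-indices with entries below [M]. *)
Definition wt M (x : midx k) : nat := (\sum_(i < k) x i * M ^ i)%N.

Lemma wtD M (x y : midx k) : wt M (madd x y) = (wt M x + wt M y)%N.
Proof. by rewrite /wt -big_split; apply: eq_bigr => i _; rewrite ffunE mulnDl. Qed.

Lemma wt_inj M (x y : midx k) :
  (forall i, x i < M)%N -> (forall i, y i < M)%N -> wt M x = wt M y -> x = y.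
Proof.
move=> xM yM xy; apply/ffunP=> i.
have valK (z : midx k) (l : 'I_k) : (z \o insubd i) l = z l by rewrite /= valKd.
rewrite -!valK; apply: (@base_digits_inj M k) (ltn_ord i) => [l _|l _|].
- exact: xM.
- exact: yM.
by under eq_bigr do rewrite valK; under [RHS]eq_bigr do rewrite valK.
Qed.

Definition is_lead P M x := [/\ P x,
  forall y, P y -> (mdeg x <= mdeg y)%N &
  forall y, P y -> mdeg y = mdeg x -> (wt M x <= wt M y)%N].

Lemma ex_lead P : (exists x, P x) ->
  exists p, forall M, exists2 x, is_lead P M x & mdeg x = p.
Proof.
move=> [x Px].
have [p [x0 [Px0 x0p]] minp] := @ex_min_nat (fun p => exists x, P x /\ mdeg x = p)
  (ex_intro _ (mdeg x) (ex_intro _ x (conj Px erefl))).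
exists p => M.
have [w [y [Py yp yw]] minw] := @ex_min_nat
  (fun w => exists y, [/\ P y, mdeg y = p & wt M y = w])
  (ex_intro _ (wt M x0) (ex_intro _ x0 (And3 Px0 x0p erefl))).
exists y => //; split=> // [z Pz|z Pz zp].
  by rewrite yp; apply: minp; exists z.
by rewrite yw; apply: minw; exists z; split=> //; rewrite zp.
Qed.

Lemma lead_split P Q M x y c : (mdeg x + mdeg y < M)%N ->
  is_lead P M x -> is_lead Q M y ->
  mle c (madd x y) -> P c -> Q (msub (madd x y) c) -> c = x.
Proof.
move=> xyM [_ xdeg xwt] [_ ydeg ywt] cxy Pc Qc.
have := mdegB cxy; have := mle_mdeg cxy; rewrite mdegD.
have := xdeg _ Pc; have := ydeg _ Qc => ddeg cdeg cle ddeg_eq.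
have c_deg : mdeg c = mdeg x by lia.
have d_deg : mdeg (msub (madd x y) c) = mdeg y by lia.
have := xwt _ Pc c_deg; have := ywt _ Qc d_deg; have := wtD M c (msub (madd x y) c).
rewrite maddBK // wtD => wt_sum dwt cwt.
by apply: (@wt_inj M); try lia; move=> i; apply: leq_ltn_trans (leq_mdeg _ i) _; lia.
Qed.

Definition xsupp f := fun a => exists b, f a b != 0.

Lemma coefM_lead f g M N af ag bf bg :
  (mdeg af + mdeg ag < M)%N -> (mdeg bf + mdeg bg < N)%N ->
  is_lead (xsupp f) M af -> is_lead (fun b => f af b != 0) N bf ->
  is_lead (xsupp g) M ag -> is_lead (fun b => g ag b != 0) N bg ->
  (f * g) (madd af ag) (madd bf bg) = f af bf * g ag bg.
Proof.
move=> afgM bfgN afL bfL agL bgL.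
rewrite coefM (big_seq_single (j := af) (uniq_below _)); last first.
- move=> c; rewrite mem_below => cle /eqP caf; apply: big1 => d _.
  have [->|fcd] := eqVneq (f c d) 0; first by rewrite mul0r.
  have [->|gcd] := eqVneq (g (msub (madd af ag) c) (msub (madd bf bg) d)) 0.
    by rewrite mulr0.
  case: caf; apply: lead_split afgM afL agL cle _ _.
    by exists d.
  by exists (msub (madd bf bg) d).
- by rewrite mem_below mle_maddr.
rewrite maddK (big_seq_single (j := bf) (uniq_below _)); last first.
- move=> d; rewrite mem_below => dle /eqP dbf.
  have [->|fd] := eqVneq (f af d) 0; first by rewrite mul0r.
  have [->|gd] := eqVneq (g ag (msub (madd bf bg) d)) 0; first by rewrite mulr0.
  by case: dbf; apply: lead_split bfgN bfL bgL dle _ _.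
- by rewrite mem_below mle_maddr.
by rewrite maddK.
Qed.

Lemma not_ordx_gtP f n : ~ ordx_gt f n -> exists2 a, (mdeg a <= n)%N & xsupp f a.
Proof.
move=> fn; apply: contra_notP fn => nex a b an.
by have [//|fab] := eqVneq (f a b) 0; case: nex; exists a => //; exists b.
Qed.

(* The leading [x]-degrees are fixed before the base [M] of the weights is
   chosen above them; the coefficient of [d * h] at the sum of the leading
   indices is then the product of two nonzero coefficients. *)
Lemma ordx_gt_mulKl (d h : PS k) nu m :
  ~ ordx_gt d nu -> ordx_gt (d * h) (nu + m) -> ordx_gt h m.
Proof.
move=> dnu dhnum; apply: contrapT => hm.
have [a1 a1nu Pa1] := not_ordx_gtP dnu; have [a2 a2m Pa2] := not_ordx_gtP hm.
have [pd pdP] := ex_lead (ex_intro _ a1 Pa1).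
have [ph phP] := ex_lead (ex_intro _ a2 Pa2).
have [af afL afdeg] := pdP (pd + ph).+1; have [ag agL agdeg] := phP (pd + ph).+1.
have [[bd Pbd] _ _] := afL; have [[bh Pbh] _ _] := agL.
have [sd sdP] := @ex_lead (fun b => d af b != 0) (ex_intro _ bd Pbd).
have [sh shP] := @ex_lead (fun b => h ag b != 0) (ex_intro _ bh Pbh).
have [bf bfL bfdeg] := sdP (sd + sh).+1; have [bg bgL bgdeg] := shP (sd + sh).+1.
have [[_ af_min _] [_ ag_min _]] := (afL, agL).
have deg_le : (mdeg (madd af ag) <= nu + m)%N.
  by rewrite mdegD leq_add // (leq_trans (af_min _ Pa1), leq_trans (ag_min _ Pa2)).
have /eqP := dhnum _ (madd bf bg) deg_le.
rewrite (coefM_lead _ _ afL bfL agL bgL) ?mdegD ?afdeg ?agdeg ?bfdeg ?bgdeg //.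
have [[dbf _ _] [hbg _ _]] := (bfL, bgL).
by rewrite mulf_eq0 (negbTE dbf) (negbTE hbg).
Qed.

End Leading.

(** * The Jacobian determinant *)

Section Jacobian.
Variable k : nat.
Variable A : 'I_k -> PS k.

Definition jacobian : 'M[PS k]_k := \matrix_(i, j) pd j (A i).

Lemma jacdet_det : jacdet A = \det jacobian.
Proof.
rewrite /jacdet; apply: eq_bigr => s _.
rewrite (eq_bigr (fun i => jacobian i (s i))); last by move=> i _; rewrite mxE.
case: (odd_perm s); apply: psP => a b;
  by rewrite /psscale /= ?expr1 ?expr0 ?mulN1r ?mul1r.
Qed.

Hypothesis A_ord1 : forall i, ordx_ge (A i) 1.

(* Cramer's rule applied to the chain rule [grad (psi o A) = (grad psi o A) A_u]. *)
Lemma det_jacobian_pscomp (psi : PS k) i :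
  \det jacobian * (pscomp (pd i psi) A : PS k) =
  \sum_j pd j (pscomp psi A) * \adj jacobian j i.
Proof.
pose grad_psiA : 'rV[PS k]_k := \row_i (pscomp (pd i psi) A : PS k).
have chain : \row_j pd j (pscomp psi A) = grad_psiA *m jacobian.
  by apply/rowP=> j; rewrite !mxE pd_pscomp //; apply: eq_bigr => l _; rewrite !mxE.
have := congr1 (fun M => (M *m \adj jacobian) ord0 i) chain.
rewrite -mulmxA mul_mx_adj mul_mx_scalar !mxE => <-.
by apply: eq_bigr => j _; rewrite mxE.
Qed.

Lemma ordx_gt_pscomp_pd (psi : PS k) nu m i :
  ~ ordx_gt (jacdet A) nu -> ordx_gt (pscomp psi A) (nu + m).+1 ->
  ordx_gt (pscomp (pd i psi) A) m.
Proof.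
rewrite jacdet_det => jac_nu comp_ord; apply: ordx_gt_mulKl jac_nu _.
rewrite det_jacobian_pscomp; apply: ordx_gt_sum => j.
by apply/ordx_gtMr/ordx_gt_pd.
Qed.

End Jacobian.

Theorem lemma4p13 (k : nat) (A : 'I_k -> ps k) (nu : nat) :
  ps_nonzero (jacdet A) ->
  (forall (i : 'I_k) (b : midx k), A i (@mzero k) b = 0) ->
  ~ ordx_gt (jacdet A) nu ->
  forall (r : nat) (psi : ps k),
    ordx_gt (pscomp psi A) (r * (nu + 1))%N ->
    ordx_gt psi r.
Proof.
(* [det A_u != 0] is implied by the order bound on [det A_u]. *)
move=> _ A0 jac_nu r.
have A_ord1 i : ordx_ge (A i : PS k) 1.
  by move=> a b; rewrite ltnS leqn0 mdeg_eq0 => /eqP ->; apply: A0.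
elim: r => [|r IH] psi comp_ord.
  by rewrite mul0n in comp_ord; apply: ordx_gt0_pscomp comp_ord.
apply: ordx_gt_from_pd => [|i].
  by apply: ordx_gt0_pscomp; apply: ordx_gt_le comp_ord.
apply: IH; apply: (ordx_gt_pscomp_pd (m := r * (nu + 1)) A_ord1 i jac_nu).
by apply: ordx_gt_le comp_ord; rewrite mulSn; lia.
Qed.
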